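(* Let $G$ be a graph and $n\ge1$, and let $\eta:G^n\to G^{(n)}$ be the graph map $\eta(v_1,\dots,v_n)=\prod_{i=1}^n v_i$. Then the induced homomorphism $\eta^*:H_1(G^n)\to H_1(G^{(n)})$, given on cycles by $\eta^*([C])=[\eta(C)]$, is surjective.
   Context: All graphs are connected, simple and locally finite. $G^n$ is the Cartesian (box) product graph. $G^{(n)}$ is the $n$th reduced power: vertices are degree-$n$ monomials in vertices of $G$, adjacent iff they differ by moving one token along one edge of $G$ (equivalently, the quotient of $G^n$ by $\Sigma_n$). For a graph $K$ with ordered vertices, $C_1(K)$ is the free abelian group on edges $w_iw_j$ ($i<j$), $[w_i,w_j]$ equals $w_iw_j$, $-w_jw_i$ or $0$ according as $i<j$, $i>j$, $i=j$, and for a path $P=(p_0,\dots,p_\ell)$, $[P]=\sum_i[p_i,p_{i+1}]$. $H_1(K)$ is the subgroup of $C_1(K)$ generated by $[C]$ for cycles $C$. A graph map $f$ induces $f^*:C_1\to C_1$ by $[u,v]\mapsto[f(u),f(v)]$. *)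

From HB Require Import structures.
From mathcomp Require Import all_boot all_order all_algebra.
From mathcomp Require Import finmap multiset.
Set Implicit Arguments. Unset Strict Implicit. Unset Printing Implicit Defensive.
Import GRing.Theory Num.Theory.
Local Open Scope ring_scope.

Fixpoint is_walk (K : Type) (adj : K -> K -> Prop) (p : seq K) : Prop :=
  match p with
  | x :: ((y :: _) as q) => adj x y /\ is_walk adj q
  | _ => True
  end.

Definition is_cycle (K : eqType) (adj : K -> K -> Prop) (p : seq K) : Prop :=
  match p with
  | [::] => False
  | x :: q => (3 <= size q)%N /\ last x q = x /\ uniq q /\ is_walk adj p
  end.

Definition graph_connected (V : Type) (adj : V -> V -> Prop) : Prop :=
  forall u v : V, exists p : seq V, is_walk adj (u :: p) /\ last u p = v.

Definition locally_finite (V : eqType) (adj : V -> V -> Prop) : Prop :=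
  forall v : V, exists s : seq V, forall w, adj v w -> w \in s.

(* A 1-chain is a formal finite Z-combination of symbols [u,v]
   (a list of (coefficient, u, v)).  Two chains are identified when they
   have the same coefficient on every oriented pair, where [u,v] = -[v,u]
   and [w,w] = 0; this is C_1(K) (canonically, independent of the vertex
   order: w_i w_j with i<j corresponds to [w_i,w_j]). *)
Definition chain (K : Type) := seq (int * K * K).

Definition chain_eval (K : eqType) (c : chain K) (x y : K) : int :=
  \sum_(t <- c) t.1.1 * (((t.1.2 == x) && (t.2 == y))%:R
                         - ((t.2 == x) && (t.1.2 == y))%:R).

Definition chain_eqv (K : eqType) (c d : chain K) : Prop :=
  forall x y : K, chain_eval c x y = chain_eval d x y.

Definition scale_chain (K : Type) (k : int) (c : chain K) : chain K :=
  [seq (k * t.1.1, t.1.2, t.2) | t <- c].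

Definition path_chain (K : Type) (p : seq K) : chain K :=
  [seq (1%R, a.1, a.2) | a <- zip p (behead p)].

Definition in_H1 (K : eqType) (adj : K -> K -> Prop) (c : chain K) : Prop :=
  exists l : seq (int * seq K),
    (forall kC, kC \in l -> is_cycle adj kC.2) /\
    chain_eqv c (flatten [seq scale_chain kC.1 (path_chain kC.2) | kC <- l]).

Definition pushforward (K L : Type) (f : K -> L) (c : chain K) : chain L :=
  [seq (t.1.1, f t.1.2, f t.2) | t <- c].

Definition boxpow_adj (V : Type) (adj : V -> V -> Prop) (n : nat)
  (s t : n.-tuple V) : Prop :=
  exists i : 'I_n, adj (tnth s i) (tnth t i) /\
    forall j : 'I_n, j != i -> tnth s j = tnth t j.

Local Open Scope mset_scope.
(* degree-n monomials in the vertices of G = multisets of size n *)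
Definition redpow (V : choiceType) (n : nat) :=
  {m : {mset V} | size m == n}.

Definition redpow_adj (V : choiceType) (adj : V -> V -> Prop) (n : nat)
  (m m' : redpow V n) : Prop :=
  exists u v : V, adj u v /\ u \in (val m : seq V) /\
    val m' = (val m `\ u) `+` [mset v].

Lemma eta_size (V : choiceType) (n : nat) (t : n.-tuple V) :
  size (seq_mset (tval t)) == n.
Proof. by rewrite (perm_size (perm_eq_seq_mset _)) size_tuple. Qed.

Definition eta_map (V : choiceType) (n : nat) (t : n.-tuple V) : redpow V n :=
  exist _ (seq_mset (tval t)) (eta_size t).

From HB Require Import structures.
From mathcomp Require Import all_boot all_order all_algebra all_fingroup.
From mathcomp Require Import finmap multiset zify.
Set Implicit Arguments. Unset Strict Implicit. Unset Printing Implicit Defensive.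
Import GRing.Theory Num.Theory.
Local Open Scope ring_scope.

(* Since H_1(G^(n)) is generated by the chains [C] of cycles C, and eta^* is
   additive, it suffices to lift the chain of each single cycle C of G^(n)
   (H1_lift_from_cycles).  A cycle C = (m_0, ..., m_l = m_0) lifts step by step
   to a walk (t_0, ..., t_l) of G^n with eta t_k = m_k (lift_walk), because
   moving one token of a monomial is moving one coordinate of a tuple.  The
   walk need not be closed: t_l is only a permutation of t_0 (eta_fiber).  We
   close it with a walk from t_l to t_0 whose image under eta has zero chain
   (eta_null_connected_permute): for a transposition (i j), move coordinate i
   from a = s_i to b = s_j along a path of G and then coordinate j back from b
   to a along the reversed path; the second leg has the reversed image of the
   first, so the chains cancel.  Finally, every closed walk of any graph has
   its chain in H_1 (H1_closed_walk, by excising repeated vertices), and the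
   pushforward of the closed lift is [C]. *)

Section Paths.
Variable T : Type.
Implicit Types (x y : T) (p q s : seq T).

Lemma rev_path x q : rev (x :: q) = last x q :: rev (belast x q).
Proof. by rewrite lastI rev_rcons. Qed.

Lemma last_rev_path x q : last (last x q) (rev (belast x q)) = x.
Proof. by case: q => [|y q] //=; rewrite rev_cons last_rcons. Qed.

Lemma path_chain_cat x q q' :
  path_chain (x :: q ++ q') = path_chain (x :: q) ++ path_chain (last x q :: q').
Proof. by elim: q x => [|y q IH] x //=; rewrite -IH. Qed.

Lemma path_chain_cons2 x y q :
  path_chain (x :: y :: q) = (1, x, y) :: path_chain (y :: q).
Proof. by []. Qed.

Lemma path_chain_rcons2 s y z :
  path_chain (rcons (rcons s y) z) = rcons (path_chain (rcons s y)) (1, y, z).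
Proof.
elim: s => [|x s IH] //; case: s IH => [|w s] IH //.
by rewrite !rcons_cons !path_chain_cons2 -!rcons_cons IH.
Qed.

Lemma path_chain_map_cat (U : Type) (f : U -> T) (u : U) r r' :
  path_chain (map f (u :: r ++ r'))
  = path_chain (map f (u :: r)) ++ path_chain (map f (last u r :: r')).
Proof. by rewrite !map_cons map_cat path_chain_cat last_map. Qed.

Variable adj : T -> T -> Prop.

Lemma walk_cat x q q' :
  is_walk adj (x :: q ++ q') <-> is_walk adj (x :: q) /\ is_walk adj (last x q :: q').
Proof.
elim: q x => [|y q IH] x; first by simpl; tauto.
change (adj x y /\ is_walk adj (y :: q ++ q') <->
        (adj x y /\ is_walk adj (y :: q)) /\ is_walk adj (last y q :: q')).
by rewrite IH; tauto.
Qed.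

Lemma walk_rev p : (forall u v, adj u v -> adj v u) ->
  is_walk adj p -> is_walk adj (rev p).
Proof.
move=> adj_sym; case: p => [|x q] //; elim: q x => [|y q IH] x //= [xy Wq].
rewrite rev_cons; have := IH y Wq; rewrite rev_cons.
elim: (rev q) => [|w s IHs] /=; first by move=> _; split=> //; apply: adj_sym.
by case: s IHs => [|w' s] IHs [? ?]; split=> //; apply: IHs.
Qed.

End Paths.

Section ChainAlgebra.
Variable K : eqType.
Implicit Types (c d : chain K) (a b x y : K).

Lemma chain_eval_nil a b : chain_eval ([::] : chain K) a b = 0.
Proof. by rewrite /chain_eval big_nil. Qed.

Lemma chain_eval_cat c d a b :
  chain_eval (c ++ d) a b = chain_eval c a b + chain_eval d a b.
Proof. by rewrite /chain_eval big_cat. Qed.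

Lemma chain_eval_scale k c a b :
  chain_eval (scale_chain k c) a b = k * chain_eval c a b.
Proof.
by rewrite /chain_eval big_map big_distrr; apply: eq_bigr => t _ /=; rewrite mulrA.
Qed.

Lemma chain_eval_combination (l : seq (int * seq K)) a b :
  chain_eval (flatten [seq scale_chain kC.1 (path_chain kC.2) | kC <- l]) a b
  = \sum_(kC <- l) kC.1 * chain_eval (path_chain kC.2) a b.
Proof.
elim: l => [|kC l IH]; first by rewrite big_nil chain_eval_nil.
by rewrite /= chain_eval_cat IH chain_eval_scale big_cons.
Qed.

Lemma chain_eval_path_rev (p : seq K) a b :
  chain_eval (path_chain (rev p)) a b = - chain_eval (path_chain p) a b.
Proof.
case: p => [|x q]; first by rewrite chain_eval_nil oppr0.
elim: q x => [|y q IH] x; first by rewrite chain_eval_nil oppr0.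
rewrite rev_cons [rev (y :: q)]rev_cons path_chain_rcons2 -cats1 chain_eval_cat.
rewrite -rev_cons IH /= /chain_eval !big_cons big_nil /= !mul1r addr0 opprD.
by rewrite addrC opprB.
Qed.

Lemma chain_eval_retrace x q a b :
  chain_eval (path_chain (x :: q ++ rev (belast x q))) a b = 0.
Proof.
by rewrite path_chain_cat chain_eval_cat -rev_path chain_eval_path_rev subrr.
Qed.

Lemma chain_eval_excise_loop x y q1 q2 q3 a b :
  chain_eval (path_chain (x :: rcons q1 y ++ rcons q2 y ++ q3)) a b
  = chain_eval (path_chain (y :: rcons q2 y)) a b
    + chain_eval (path_chain (x :: rcons q1 y ++ q3)) a b.
Proof. by rewrite !path_chain_cat !last_rcons !chain_eval_cat addrCA. Qed.

End ChainAlgebra.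

Section Homology.
Variables (K : eqType) (adj : K -> K -> Prop).
Implicit Types (c d : chain K).

Lemma H1_eqv c d : in_H1 adj c -> chain_eqv c d -> in_H1 adj d.
Proof. by move=> [l [Hl E]] Ecd; exists l; split=> // a b; rewrite -Ecd E. Qed.

Lemma H1_null c : (forall a b, chain_eval c a b = 0) -> in_H1 adj c.
Proof.
move=> c0; exists [::]; split=> [kC|a b]; first by rewrite in_nil.
by rewrite c0 chain_eval_nil.
Qed.

Lemma H1_cat c d : in_H1 adj c -> in_H1 adj d -> in_H1 adj (c ++ d).
Proof.
move=> [l1 [H1 E1]] [l2 [H2 E2]]; exists (l1 ++ l2); split.
  by move=> kC; rewrite mem_cat => /orP [/H1|/H2].
by move=> a b; rewrite map_cat flatten_cat !chain_eval_cat E1 E2.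
Qed.

Lemma H1_scale k c : in_H1 adj c -> in_H1 adj (scale_chain k c).
Proof.
move=> [l [Hl E]]; exists [seq (k * kC.1, kC.2) | kC <- l]; split.
  by move=> kC /mapP [kC' /Hl ? ->].
move=> a b; rewrite chain_eval_scale E !chain_eval_combination big_map big_distrr.
by apply: eq_bigr => kC _ /=; rewrite mulrA.
Qed.

Lemma not_uniq_split (q : seq K) :
  ~~ uniq q -> exists q1 y q2 q3, q = rcons q1 y ++ rcons q2 y ++ q3.
Proof.
elim: q => [|z r IH] //=; case zr: (z \in r) => /=.
  by move=> _; case/splitPr: zr => r1 r2; exists [::], z, r1, r2; rewrite !cat_rcons.
by move=> /IH [q1 [y [q2 [q3 ->]]]]; exists (z :: q1), y, q2, q3.
Qed.

Lemma H1_short_closed_walk x q : (size q < 3)%N -> last x q = x ->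
  in_H1 adj (path_chain (x :: q)).
Proof.
move=> short closed; apply: H1_null => a b.
case: q short closed => [|y [|z [|w q]]] //= _.
- by rewrite chain_eval_nil.
- by move=> <-; rewrite /chain_eval big_cons big_nil subrr mulr0 addr0.
- move=> ->; rewrite /chain_eval !big_cons big_nil !mul1r addr0.
  by rewrite addrA subrK subrr.
Qed.

(* Every closed walk has its chain in H_1: a closed walk without repeated
   vertex is a cycle or short, otherwise excise a loop and induct on length. *)
Lemma H1_closed_walk x q : is_walk adj (x :: q) -> last x q = x ->
  in_H1 adj (path_chain (x :: q)).
Proof.
have [m] := ubnP (size q); elim: m x q => // m IH x q size_q walk_q closed.
have [uniq_q|/not_uniq_split [q1 [y [q2 [q3 def_q]]]]] := boolP (uniq q).
  have [long|short] := leqP 3 (size q); last exact: H1_short_closed_walk.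
  exists [:: (1, x :: q)]; split; first by move=> kC; rewrite inE => /eqP ->.
  by move=> a b; rewrite chain_eval_combination big_seq1 mul1r.
move: size_q walk_q closed; rewrite def_q !size_cat !size_rcons => size_q.
move=> /walk_cat [W1]; rewrite last_rcons => /walk_cat [W2]; rewrite last_rcons => W3.
rewrite !last_cat !last_rcons => closed.
have loop : in_H1 adj (path_chain (y :: rcons q2 y)).
  by apply: IH; rewrite ?last_rcons // size_rcons; lia.
have rest : in_H1 adj (path_chain (x :: rcons q1 y ++ q3)).
  apply: IH; rewrite ?last_cat ?last_rcons //; first by rewrite size_cat size_rcons; lia.
  by apply/walk_cat; rewrite last_rcons.
apply: H1_eqv (H1_cat loop rest) _ => a b.
by rewrite chain_eval_excise_loop chain_eval_cat.
Qed.

End Homology.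

Lemma pushforward_path_chain (K L : Type) (f : K -> L) (p : seq K) :
  pushforward f (path_chain p) = path_chain (map f p).
Proof. by elim: p => [|x [|y p] IH] //=; move: IH => /= ->. Qed.

Lemma pushforward_scale (K L : Type) (f : K -> L) k (c : chain K) :
  pushforward f (scale_chain k c) = scale_chain k (pushforward f c).
Proof. by rewrite /pushforward /scale_chain -!map_comp; apply: eq_map. Qed.

Lemma H1_lift_from_cycles (K L : eqType) (adjK : K -> K -> Prop)
    (adjL : L -> L -> Prop) (f : K -> L) :
  (forall C, is_cycle adjL C -> exists d,
     in_H1 adjK d /\ chain_eqv (pushforward f d) (path_chain C)) ->
  forall c, in_H1 adjL c -> exists d, in_H1 adjK d /\ chain_eqv (pushforward f d) c.
Proof.
move=> lift_cycle c [l [cycles_l Ec]].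
suff [d [Hd Ed]] : exists d, in_H1 adjK d /\ chain_eqv (pushforward f d)
    (flatten [seq scale_chain kC.1 (path_chain kC.2) | kC <- l]).
  by exists d; split=> // a b; rewrite Ed Ec.
elim: l cycles_l {Ec} => [|kC l IH] cycles_l.
  by exists [::]; split=> //; apply: H1_null => a b; rewrite chain_eval_nil.
have [dC [HdC EdC]] := lift_cycle _ (cycles_l kC (mem_head _ _)).
have /IH [d [Hd Ed]] : forall kC', kC' \in l -> is_cycle adjL kC'.2.
  by move=> kC' l_kC'; apply: cycles_l; rewrite inE l_kC' orbT.
exists (scale_chain kC.1 dC ++ d); split; first by apply: H1_cat => //; apply: H1_scale.
move=> a b; rewrite /pushforward map_cat -!/(pushforward _ _) pushforward_scale.
by rewrite /= !chain_eval_cat !chain_eval_scale EdC Ed.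
Qed.

Section ReducedPower.
Variables (V : choiceType) (adj : rel V) (n : nat).
Hypothesis adj_sym : symmetric adj.
Hypothesis G_conn : graph_connected adj.

Local Notation eta := (@eta_map V n).
Local Notation box_adj := (@boxpow_adj V adj n).
Local Notation red_adj := (@redpow_adj V adj n).
Implicit Types (s t : n.-tuple V) (i j : 'I_n).

Definition set_coord s i (y : V) : n.-tuple V :=
  [tuple (if k == i then y else tnth s k) | k < n].

Definition permute s (p : 'S_n) : n.-tuple V := [tuple tnth s (p k) | k < n].

Lemma tnth_set_coord s i y k : tnth (set_coord s i y) k = if k == i then y else tnth s k.
Proof. by rewrite tnth_mktuple. Qed.

Lemma set_coord_id s i : set_coord s i (tnth s i) = s.
Proof. by apply: eq_from_tnth => k; rewrite tnth_set_coord; case: eqP => [->|]. Qed.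

Lemma set_coord_swap s i j y : i != j ->
  set_coord (set_coord s i (tnth s j)) j y = permute (set_coord s i y) (tperm i j).
Proof.
move=> ij; apply: eq_from_tnth => k; rewrite !tnth_set_coord tnth_mktuple tnth_set_coord.
case: (eqVneq k j) => [->|kj]; first by rewrite tpermR eqxx.
case: (eqVneq k i) => [->|ki]; first by rewrite tpermL eq_sym (negbTE ij).
by rewrite tpermD ?(negbTE ki) // eq_sym.
Qed.

Lemma permute1 s : permute s 1 = s.
Proof. by apply: eq_from_tnth => k; rewrite tnth_mktuple perm1. Qed.

Lemma permuteM s (p q : 'S_n) : permute s (p * q) = permute (permute s q) p.
Proof. by apply: eq_from_tnth => k; rewrite !tnth_mktuple permM. Qed.

Lemma eta_permute s p : eta (permute s p) = eta s.
Proof. by apply: val_inj; apply/eq_seq_msetP/tuple_permP; exists p. Qed.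

Lemma eta_fiber s t : eta s = eta t -> exists p, t = permute s p.
Proof.
move/(congr1 val) => /= /eq_seq_msetP; rewrite perm_sym => /tuple_permP [p Hp].
by exists p; apply: val_inj.
Qed.

Lemma walk_set_coord s i a r :
  is_walk adj (a :: r) -> is_walk box_adj (map (set_coord s i) (a :: r)).
Proof.
elim: r a => [|c r IH] a //= [ac Wr]; split; last exact: IH.
exists i; rewrite !tnth_set_coord eqxx; split=> // j ji.
by rewrite !tnth_set_coord (negbTE ji).
Qed.

Definition eta_null_connected s t := exists q,
  [/\ is_walk box_adj (s :: q), last s q = t &
      forall x y, chain_eval (path_chain (map eta (s :: q))) x y = 0].

Lemma eta_null_connected_refl s : eta_null_connected s s.
Proof. by exists [::]; split=> // x y; rewrite chain_eval_nil. Qed.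

Lemma eta_null_connected_trans s t u :
  eta_null_connected s t -> eta_null_connected t u -> eta_null_connected s u.
Proof.
move=> [q1 [W1 L1 E1]] [q2 [W2 L2 E2]]; exists (q1 ++ q2); split.
- by apply/walk_cat; rewrite L1.
- by rewrite last_cat L1.
by move=> x y; rewrite path_chain_map_cat chain_eval_cat L1 E1 E2 addr0.
Qed.

(* Swapping two coordinates a = s_i, b = s_j: move coordinate i along a path
   r from a to b, then coordinate j back along the reversed path.  The second
   leg has the reversed image of the first under eta, so the chains cancel. *)
Lemma eta_null_connected_swap s i j :
  i != j -> eta_null_connected s (permute s (tperm i j)).
Proof.
move=> ij; set a := tnth s i; set b := tnth s j; set s' := set_coord s i b.
have [r [Wr ab]] := G_conn a b.
set back := rev (belast a r).
have Wback : is_walk adj (b :: back).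
  by rewrite -ab -rev_path; apply: walk_rev Wr => u v; rewrite adj_sym.
have def_s : s = set_coord s i a by rewrite set_coord_id.
have def_s' : s' = set_coord s' j b.
  have s'_j : tnth s' j = b by rewrite tnth_set_coord eq_sym (negbTE ij).
  by rewrite -[X in set_coord _ _ X]s'_j set_coord_id.
have swapped_image y : eta (set_coord s' j y) = eta (set_coord s i y).
  by rewrite set_coord_swap // eta_permute.
exists (map (set_coord s i) r ++ map (set_coord s' j) back); split.
- apply/walk_cat; split; first by rewrite {1}def_s; apply: walk_set_coord.
  by rewrite {1}def_s last_map ab -/s' {1}def_s'; apply: walk_set_coord.
- rewrite last_cat {1}def_s last_map ab -/s' {1}def_s' last_map -ab last_rev_path.
  by rewrite set_coord_swap // set_coord_id.
set g := eta \o set_coord s i.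
have -> : map eta (s :: map (set_coord s i) r ++ map (set_coord s' j) back)
        = map g (a :: r ++ back).
  rewrite {1}def_s /= !map_cat -!map_comp.
  by rewrite (eq_map (f := eta \o set_coord s' j) swapped_image).
by move=> x y; rewrite map_cons map_cat /back map_rev -belast_map chain_eval_retrace.
Qed.

(* Hence s is eta-null-connected to each of its permutations, since every
   permutation is a product of transpositions. *)
Lemma eta_null_connected_permute s p : eta_null_connected s (permute s p).
Proof.
have [ts -> dpair_ts] := prod_tpermP p.
elim: ts dpair_ts s => [|t ts IH] /=.
  by move=> _ s; rewrite big_nil permute1; apply: eta_null_connected_refl.
move=> /andP [dpair_t dpair_ts] s; rewrite big_cons permuteM.
exact: eta_null_connected_trans (IH dpair_ts s) (eta_null_connected_swap _ dpair_t).
Qed.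

Lemma count_mem_tuple t a : count_mem a t = (\sum_(k < n) (tnth t k == a))%N.
Proof. by rewrite -sum1_count big_tuple big_mkcond. Qed.

Lemma val_eta t : val (eta t) = seq_mset (tval t).
Proof. by []. Qed.

(* Moving a token u -> v of eta t lifts to moving a coordinate equal to u. *)
Lemma lift_step t m : red_adj (eta t) m -> exists t', box_adj t t' /\ eta t' = m.
Proof.
move=> [u [v [uv [u_t def_m]]]].
have /tnthP [i t_i] : u \in tval t by rewrite -(perm_mem (perm_eq_seq_mset t)).
exists (set_coord t i v); split.
  exists i; rewrite tnth_set_coord eqxx -t_i; split=> // j ji.
  by rewrite tnth_set_coord (negbTE ji).
apply: val_inj; rewrite def_m; apply/msetP => a.
rewrite !val_eta mset_seqE msetE2 msetB1E msetnE mset_seqE !count_mem_tuple.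
rewrite (bigD1 i) // [X in _ = (X - _ + _)%N](bigD1 i) // tnth_set_coord eqxx -t_i.
under eq_bigr => k /andP [_ ki] do rewrite tnth_set_coord (negbTE ki).
by rewrite !(eq_sym a); case: (u == a); case: (v == a); rewrite /=; lia.
Qed.

Lemma lift_walk q t : is_walk red_adj (eta t :: q) ->
  exists q', is_walk box_adj (t :: q') /\ map eta q' = q.
Proof.
elim: q t => [|m q IH] t; first by exists [::].
move=> [/lift_step [t' [tt' <-]] /IH [q' [Wq' <-]]].
by exists (t' :: q').
Qed.

(* The chain of a cycle of G^(n) is the pushforward of the chain of a closed
   walk of G^n: lift the cycle, then return to the start within the fibre. *)
Lemma cycle_lift C : is_cycle red_adj C ->
  exists d, in_H1 box_adj d /\ chain_eqv (pushforward eta d) (path_chain C).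
Proof.
case: C => [|m q] //= [_ [closed [_ Wq]]].
pose t := Tuple (valP m).
have eta_t : eta t = m by apply: val_inj; exact: seq_mset_id.
rewrite -eta_t in Wq; have [q' [Wq' def_q]] := lift_walk Wq.
have : eta (last t q') = eta t by rewrite -last_map def_q eta_t closed.
move=> /eta_fiber [p def_t].
have [w [Ww Lw Ew]] := eta_null_connected_permute (last t q') p.
exists (path_chain (t :: q' ++ w)); split.
  by apply: H1_closed_walk; [apply/walk_cat | rewrite last_cat Lw].
move=> a b; rewrite pushforward_path_chain path_chain_map_cat chain_eval_cat.
by rewrite Ew addr0 map_cons def_q eta_t.
Qed.

End ReducedPower.

Theorem lemma4p3 (V : choiceType) (adj : rel V)
  (adj_sym : symmetric adj) (adj_irr : irreflexive adj)
  (G_conn : graph_connected adj) (G_lf : locally_finite adj)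
  (n : nat) (n_ge1 : (1 <= n)%N) :
  forall c : chain (redpow V n),
    in_H1 (@redpow_adj V adj n) c ->
    exists d : chain (n.-tuple V),
      in_H1 (@boxpow_adj V adj n) d /\
      chain_eqv (pushforward (@eta_map V n) d) c.
Proof. exact: H1_lift_from_cycles (cycle_lift adj_sym G_conn). Qed.
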